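(* Let $p\ge3$ be a prime, $P$ cyclic of order $p$, and $K\le\mathrm{Aut}(P)$. For $i,j\in\{1,2,3\}$ with $i\ne j$ such that $|\sigma_i|$ and $|\sigma_j|$ divide $|K|$, the $S$-rings $\mathcal{A}_i(K)$ and $\mathcal{A}_j(K)$ are not algebraically isomorphic.
   Context: $E_1=\langle a\rangle\times\langle b\rangle$ with $|a|=|b|=2$, $E_2=\langle c\rangle$ with $|c|=4$. $\sigma_1\in\mathrm{Aut}(E_1)$: $a\mapsto b$, $b\mapsto ab$ (order 3); $\sigma_2\in\mathrm{Aut}(E_1)$: $a\mapsto b$, $b\mapsto a$ (order 2); $\sigma_3\in\mathrm{Aut}(E_2)$: $c\mapsto c^{-1}$ (order 2). Let $E=E_1$ for $i=1,2$ and $E=E_2$ for $i=3$, $G=E\times P$. For $K\le\mathrm{Aut}(P)$ with $|\sigma_i|$ dividing $|K|$: fix a generator $\theta$ of $K$, let $M\le K$ have index $|\sigma_i|$, let $\psi:\langle\sigma_i\rangle\to K/M$, $\sigma_i^k\mapsto M\theta^k$, and $A(\langle\sigma_i\rangle,K,\psi)=\{(x,y)\in\langle\sigma_i\rangle\times K:x^\psi=yM\}\le\mathrm{Aut}(E)\times\mathrm{Aut}(P)\le\mathrm{Aut}(G)$. Then $\mathcal{A}_i(K)=\mathrm{Cyc}(A(\langle\sigma_i\rangle,K,\psi),G)$, where for $A\le\mathrm{Aut}(G)$, $\mathrm{Cyc}(A,G)$ is the $S$-ring over $G$ whose basic sets are the $A$-orbits on $G$. An $S$-ring over $G$ is a subring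 of $\mathbb{Z}G$ spanned by $\underline{X}=\sum_{x\in X}x$ over a partition $\mathcal{S}$ (basic sets) of $G$ containing $\{e\}$ and closed under inversion; structure constants $c^Z_{X,Y}$ count pairs $(x,y)\in X\times Y$ with $xy=z$ for fixed $z\in Z$. An algebraic isomorphism is a bijection between the sets of basic sets preserving all structure constants. *)

From mathcomp Require Import all_boot all_order all_algebra all_fingroup all_solvable.
Set Implicit Arguments. Unset Strict Implicit. Unset Printing Implicit Defensive.

Local Open Scope group_scope.

(* E1 = Z/2 x Z/2 (a = (1,0), b = (0,1), group law = componentwise addition),
   E2 = Z/4 (c = 1).  P = Z/p (the cyclic group of order p).              *)
Definition E1 : finGroupType := ('Z_2 * 'Z_2)%type.
Definition E2 : finGroupType := 'Z_4.

(* sigma_1 : a |-> b, b |-> ab, i.e. a^u b^v |-> b^u (ab)^v = a^v b^(u+v). *)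
Definition sig1_fun (x : E1) : E1 := (x.2, x.1 * x.2).
Lemma sig1_inj : injective sig1_fun.
Proof.
apply: (can_inj (g := fun x : E1 => (x.2 * x.1^-1, x.1))).
by case=> u v; rewrite /sig1_fun /= mulgK.
Qed.
Definition sigma1 : {perm E1} := perm sig1_inj.

Definition sig2_fun (x : E1) : E1 := (x.2, x.1).
Lemma sig2_inj : injective sig2_fun.
Proof. by apply: (can_inj (g := sig2_fun)); case. Qed.
Definition sigma2 : {perm E1} := perm sig2_inj.

Definition sig3_fun (x : E2) : E2 := x^-1.
Lemma sig3_inj : injective sig3_fun.
Proof. exact: invg_inj. Qed.
Definition sigma3 : {perm E2} := perm sig3_inj.

(* psi : <sigma> -> K/M, sigma^k |-> M theta^k.  The pair (x, y) lies in A iff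
   x = sigma^k for some k and y M = M theta^k, i.e. y \in M theta^k.         *)
Definition Agrp (E P : finGroupType) (sigma : {perm E}) (K : {set {perm P}})
    (theta : {perm P}) (M : {set {perm P}}) : {set {perm E} * {perm P}} :=
  [set xy | [exists k : 'I_#[sigma],
      [&& xy.1 == sigma ^+ k, xy.2 \in K & xy.2 \in M :* (theta ^+ k)]]].

Definition cyc_sets (E P : finGroupType) (A : {set {perm E} * {perm P}})
    : {set {set (E * P)%type}} :=
  [set [set ((xy.1 g.1, xy.2 g.2) : (E * P)%type) | xy : {perm E} * {perm P} in A]
     | g : (E * P)%type in [set: (E * P)%type]].

(* c^Z_{X,Y} = #{(x,y) in X x Y : x y = z} for a fixed z in Z (z = repr Z). *)
Definition struct_const (gT : finGroupType) (X Y Z : {set gT}) : nat :=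
  #|[set u in setX X Y | u.1 * u.2 == repr Z]|.

Definition alg_iso (gT1 gT2 : finGroupType)
    (S1 : {set {set gT1}}) (S2 : {set {set gT2}}) : Prop :=
  exists f : {set gT1} -> {set gT2},
    [/\ {in S1 &, injective f}, f @: S1 = S2 &
        forall X Y Z, X \in S1 -> Y \in S1 -> Z \in S1 ->
          struct_const X Y Z = struct_const (f X) (f Y) (f Z)].

Record Sring := MkSring { sr_group : finGroupType; sr_basic : {set {set sr_group}} }.

Definition alg_iso_sr (S1 S2 : Sring) : Prop := alg_iso (sr_basic S1) (sr_basic S2).

Definition sigma_order (i : nat) : nat :=
  match i with 1 => #[sigma1] | 2 => #[sigma2] | _ => #[sigma3] end.

Definition calA (p i : nat) (K : {set {perm 'Z_p}}) (theta : {perm 'Z_p})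
    (M : {set {perm 'Z_p}}) : Sring :=
  match i with
  | 1 => @MkSring (E1 * 'Z_p)%type (cyc_sets (Agrp sigma1 K theta M))
  | 2 => @MkSring (E1 * 'Z_p)%type (cyc_sets (Agrp sigma2 K theta M))
  | _ => @MkSring (E2 * 'Z_p)%type (cyc_sets (Agrp sigma3 K theta M))
  end.

(* Two properties of the set of basic sets are invariant under algebraic
   isomorphisms, since an algebraic isomorphism fixes the basic set [{1}] and
   preserves the constants c^1_{X,X} = #{(x, y) in X * X | x y = 1}: the
   existence of a nontrivial basic set with c^1_{X,X} = 1, and c^1_{X,X} <> 0
   for every basic set X (all basic sets are symmetric).
   The basic sets of A_i(K) are the orbits of the cyclic group generated by
   (sigma_i, theta) acting on E * P.  For i = 1 the generator fixes only the
   identity, and this rules out a basic set with c^1_{X,X} = 1; for i = 2, 3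
   the involution (ab, 1), resp. (c^2, 1), is a fixed point giving such a
   basic set.  To separate A_2 from A_3, write |K| = 2h: then theta^h is the
   inversion of P, and comparing parities of exponents shows that every orbit
   is symmetric iff sigma_i^h inverts E, i.e. iff h is even for i = 2 and iff
   h is odd for i = 3. *)

From mathcomp Require Import all_boot all_order all_algebra all_fingroup all_solvable.
Set Implicit Arguments. Unset Strict Implicit. Unset Printing Implicit Defensive.
Local Open Scope group_scope.

Section InvPairs.
Variable gT : finGroupType.
Implicit Types (X Y : {set gT}) (S : {set {set gT}}).

Definition inv_pairs X : nat := struct_const X X [set 1].

Definition one_isolated S :=
  [/\ [set 1] \in S, set0 \notin S & {in S, forall X, 1 \in X -> X = [set 1]}].

Definition has_unique_inv_pair S :=
  [exists X in S, (X != [set 1]) && (inv_pairs X == 1%N)].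

(* For an orbit X, [inv_pairs X != 0] means X = X^-1. *)
Definition all_symmetric S := [forall X in S, inv_pairs X != 0%N].

Lemma struct_const1l Y : Y != set0 -> struct_const [set 1] Y Y != 0%N.
Proof.
case/set0Pn=> y /mem_repr reprY; rewrite /struct_const cards_eq0; apply/set0Pn.
by exists (1, repr Y); rewrite !inE /= mul1g reprY !eqxx.
Qed.

Lemma struct_const11 X : struct_const X [set 1] [set 1] != 0%N -> 1 \in X.
Proof.
rewrite /struct_const cards_eq0 => /set0Pn[[x y]].
by rewrite !inE repr_set1 /= => /andP[/andP[Xx /eqP->]]; rewrite mulg1 => /eqP<-.
Qed.

Lemma inv_pairs_set1 x : inv_pairs [set x] = (x * x == 1).
Proof.
rewrite /inv_pairs /struct_const repr_set1.
have [xx1 | xxN1] := eqP; last first.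
  apply/eqP; rewrite cards_eq0; apply/eqP/setP=> -[y z].
  by rewrite !inE /=; apply/negP=> /andP[/andP[/eqP-> /eqP->]] /eqP.
apply/eqP/cards1P; exists (x, x); apply/setP=> -[y z]; rewrite !inE /=.
by apply/idP/eqP=> [/andP[/andP[/eqP-> /eqP->]] | [-> ->]] //; rewrite !eqxx xx1 /=.
Qed.

End InvPairs.

Section AlgIsoInvariants.
Variables (gT1 gT2 : finGroupType) (S1 : {set {set gT1}}) (S2 : {set {set gT2}}).
Variable f : {set gT1} -> {set gT2}.
Hypotheses (f_inj : {in S1 &, injective f}) (f_onto : f @: S1 = S2).
Hypothesis f_const : forall X Y Z, X \in S1 -> Y \in S1 -> Z \in S1 ->
  struct_const X Y Z = struct_const (f X) (f Y) (f Z).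
Hypotheses (S1_one : one_isolated S1) (S2_one : one_isolated S2).

Let f_in X : X \in S1 -> f X \in S2.
Proof. by move=> S1X; rewrite -f_onto imset_f. Qed.

Lemma alg_iso1 : f [set 1] = [set 1].
Proof.
have [one1 noset0 _] := S1_one; have [one2 _ sep2] := S2_one.
(* c^Y_{1,Y} <> 0 for the preimage Y of [1] transfers to c^1_{f 1, 1} <> 0. *)
have /imsetP[Y S1Y defY] : [set 1] \in f @: S1 by rewrite f_onto.
apply: sep2; first exact: f_in.
rewrite struct_const11 // defY -f_const // struct_const1l //.
by apply: contraNneq noset0 => <-.
Qed.

Lemma alg_iso_neq1 X : X \in S1 -> (f X != [set 1]) = (X != [set 1]).
Proof.
have [one1 _ _] := S1_one.
by move=> S1X; rewrite -{1}alg_iso1 (inj_in_eq f_inj).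
Qed.

Lemma alg_iso_inv_pairs X : X \in S1 -> inv_pairs (f X) = inv_pairs X.
Proof. by have [one1 _ _] := S1_one; move=> S1X; rewrite /inv_pairs -alg_iso1 -f_const. Qed.

Lemma alg_iso_has_unique_inv_pair : has_unique_inv_pair S1 = has_unique_inv_pair S2.
Proof.
apply/exists_inP/exists_inP=> [[X S1X XP] | [Y]].
  by exists (f X); rewrite ?f_in ?alg_iso_neq1 ?alg_iso_inv_pairs.
rewrite -f_onto => /imsetP[X S1X ->] XP.
by exists X; rewrite -?alg_iso_neq1 -?alg_iso_inv_pairs.
Qed.

Lemma alg_iso_all_symmetric : all_symmetric S1 = all_symmetric S2.
Proof.
apply/forall_inP/forall_inP=> [symS1 Y | symS2 X S1X].
  by rewrite -f_onto => /imsetP[X S1X ->]; rewrite alg_iso_inv_pairs ?symS1.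
by rewrite -alg_iso_inv_pairs ?symS2 ?f_in.
Qed.

End AlgIsoInvariants.

Lemma alg_iso_invariants (gT1 gT2 : finGroupType)
    (S1 : {set {set gT1}}) (S2 : {set {set gT2}}) :
    one_isolated S1 -> one_isolated S2 -> alg_iso S1 S2 ->
  has_unique_inv_pair S1 = has_unique_inv_pair S2 /\ all_symmetric S1 = all_symmetric S2.
Proof.
move=> S1_one S2_one [f [f_inj f_onto f_const]].
by split; [apply: alg_iso_has_unique_inv_pair | apply: alg_iso_all_symmetric]; eassumption.
Qed.

Section AutFacts.
Variable gT : finGroupType.
Implicit Types (a : {perm gT}) (x y : gT).

Lemma aut1 a : a \in Aut [set: gT] -> a 1 = 1.
Proof. by move=> autA; rewrite -(autmE autA) morph1. Qed.

Lemma autM a x y : a \in Aut [set: gT] -> a (x * y) = a x * a y.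
Proof. by move=> autA; rewrite -(autmE autA) morphM ?inE. Qed.

Lemma autV a x : a \in Aut [set: gT] -> a x^-1 = (a x)^-1.
Proof. by move=> autA; rewrite -(autmE autA) morphV ?inE. Qed.

Lemma morph_perm_Aut a : {morph a : x y / x * y} -> a \in Aut [set: gT].
Proof.
move=> aM; rewrite inE; apply/andP; split; first by apply/subsetP=> x; rewrite inE.
by apply/morphicP=> x y _ _; apply: aM.
Qed.

Lemma eq_Aut_cycle (G : {group gT}) a b x : G :=: <[x]> ->
  a \in Aut G -> b \in Aut G -> a x = b x -> a = b.
Proof.
move=> defG autA autB abx; apply: (eq_Aut autA autB) => y.
have Gx : x \in G by rewrite defG cycle_id.
rewrite defG => /cycleP[k ->].
by rewrite -(autmE autA) -(autmE autB) !morphX //= !autmE abx.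
Qed.

End AutFacts.

Lemma cycle_subgroup_index (gT : finGroupType) (x : gT) (M : {group gT}) :
  M \subset <[x]> -> M :=: <[x ^+ #|<[x]> : M|]>.
Proof.
move=> sMx; apply/eqP; rewrite (eq_subG_cyclic (cycle_cyclic x)) ?cycle_subG ?mem_cycle //.
by rewrite -orderE orderXdiv orderE ?dvdn_indexg // -(Lagrange sMx) mulnK.
Qed.

Lemma permX_involutive (T : finType) (s : {perm T}) n x :
  involutive s -> (s ^+ n) x = if odd n then s x else x.
Proof. by move=> sK; rewrite permX; elim: n => //= n ->; case: (odd n); rewrite /= ?sK. Qed.

Lemma order_involutive_perm (T : finType) (s : {perm T}) x :
  involutive s -> s x != x -> #[s] = 2.
Proof.
move=> sK nfix_x; apply: nt_prime_order => //.
  by apply/permP=> y; rewrite perm1 expgS expg1 permM sK.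
by apply: contraNneq nfix_x => ->; rewrite perm1.
Qed.

Section CycOrbits.
Variables (E P : finGroupType) (sigma : {perm E}) (theta : {perm P}).
Variables (K M : {group {perm P}}).
Hypotheses (defK : K :=: <[theta]>) (defM : M :=: <[theta ^+ #[sigma]]>).

Local Notation A := (Agrp sigma K theta M).

Definition cyc_act n (g : E * P) : E * P := ((sigma ^+ n) g.1, (theta ^+ n) g.2).

Definition cyc_orbit (g : E * P) : {set E * P} :=
  [set ((xy.1 g.1, xy.2 g.2) : E * P) | xy : {perm E} * {perm P} in A].

Lemma AgrpP xy : reflect (exists n, xy = (sigma ^+ n, theta ^+ n)) (xy \in A).
Proof.
apply: (iffP idP) => [|[n ->]].
  rewrite inE => /existsP[k /and3P[/eqP xy1 _]].
  rewrite mem_rcoset defM => /cycleP[t xy2].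
  exists (#[sigma] * t + k)%N; case: xy xy1 xy2 => x y /= -> xy2.
  by rewrite !expgD !expgM expg_order expg1n mul1g -xy2 mulgKV.
rewrite inE; apply/existsP; exists (Ordinal (ltn_pmod n (order_gt0 sigma))).
rewrite /= expg_mod_order eqxx defK mem_cycle mem_rcoset defM.
by rewrite {1}(divn_eq n #[sigma]) expgD mulgK mulnC expgM mem_cycle.
Qed.

Lemma cyc_orbitP u g : reflect (exists n, u = cyc_act n g) (u \in cyc_orbit g).
Proof.
apply: (iffP imsetP) => [[_ /AgrpP[n ->] ->] | [n ->]]; first by exists n.
by exists (sigma ^+ n, theta ^+ n); first by apply/AgrpP; exists n.
Qed.

Lemma cyc_setsP X : reflect (exists g, X = cyc_orbit g) (X \in cyc_sets A).
Proof. by apply: (iffP imsetP) => [[g _ ->] | [g ->]]; exists g. Qed.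

Lemma cyc_act0 g : cyc_act 0 g = g.
Proof. by case: g => x y; rewrite /cyc_act !expg0 !perm1. Qed.

Lemma cyc_actD m n g : cyc_act (m + n) g = cyc_act n (cyc_act m g).
Proof. by rewrite /cyc_act !expgD !permM. Qed.

Lemma cyc_orbit_id g : g \in cyc_orbit g.
Proof. by apply/cyc_orbitP; exists 0%N; rewrite cyc_act0. Qed.

Lemma cyc_act_in_orbit n g : cyc_act n g \in cyc_orbit g.
Proof. by apply/cyc_orbitP; exists n. Qed.

Lemma cyc_act_orbit n u g : u \in cyc_orbit g -> cyc_act n u \in cyc_orbit g.
Proof. by case/cyc_orbitP=> m ->; rewrite -cyc_actD cyc_act_in_orbit. Qed.

Hypotheses (sigma_aut : sigma \in Aut [set: E]) (theta_aut : theta \in Aut [set: P]).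

Lemma cyc_act1 n : cyc_act n 1 = 1.
Proof. by rewrite /cyc_act !aut1 ?groupX. Qed.

Lemma cyc_actM n g h : cyc_act n (g * h) = cyc_act n g * cyc_act n h.
Proof. by rewrite /cyc_act !autM ?groupX. Qed.

Lemma cyc_actV n g : cyc_act n g^-1 = (cyc_act n g)^-1.
Proof. by rewrite /cyc_act !autV ?groupX. Qed.

Lemma cyc_act_inj n : injective (cyc_act n).
Proof. by move=> [x y] [x' y'] [/perm_inj-> /perm_inj->]. Qed.

Lemma cyc_act_period n g : cyc_act (#[sigma] * #[theta] * n) g = g.
Proof.
case: g => x y; rewrite /cyc_act /= -mulnA expgM expg_order expg1n perm1.
by rewrite mulnCA expgM expg_order expg1n perm1.
Qed.

Lemma cyc_orbit1 : cyc_orbit 1 = [set 1].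
Proof.
apply/setP=> u; rewrite inE.
by apply/cyc_orbitP/eqP=> [[n ->] | ->]; [exact: cyc_act1 | exists 0%N; rewrite cyc_act0].
Qed.

Lemma one_isolated_cyc_sets : one_isolated (cyc_sets A).
Proof.
split.
- by apply/cyc_setsP; exists 1; rewrite cyc_orbit1.
- by apply/cyc_setsP=> -[g /setP/(_ g)]; rewrite inE cyc_orbit_id.
move=> _ /cyc_setsP[g ->] /cyc_orbitP[n g1].
by rewrite -cyc_orbit1; congr cyc_orbit; apply: (@cyc_act_inj n); rewrite -g1 cyc_act1.
Qed.

Lemma inv_pairs_cyc_orbit g : (inv_pairs (cyc_orbit g) != 0%N) = (g^-1 \in cyc_orbit g).
Proof.
rewrite /inv_pairs /struct_const repr_set1 cards_eq0; apply/set0Pn/idP=> [[[u v]] | orb_gV].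
  rewrite !inE /= => /andP[/andP[/cyc_orbitP[n ->] /cyc_orbitP[m ->]]].
  rewrite -eq_invg_mul -cyc_actV => /eqP act_gV.
  (* [cyc_act] has period #[sigma] * #[theta], so [cyc_act k] undoes [cyc_act n]. *)
  pose k := ((#[sigma] * #[theta]).-1 * n)%N.
  have <- : cyc_act k (cyc_act n g^-1) = g^-1.
    rewrite -cyc_actD -{1}[n]mul1n -mulnDl add1n prednK ?cyc_act_period //.
    by rewrite muln_gt0 !order_gt0.
  by rewrite act_gV -cyc_actD cyc_act_in_orbit.
exists (g, g^-1).
by rewrite !inE /= cyc_orbit_id orb_gV mulgV eqxx.
Qed.

Lemma unique_inv_pair_cyc_fixed t : sigma t = t -> t * t = 1 -> t != 1 ->
  has_unique_inv_pair (cyc_sets A).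
Proof.
move=> sigma_t tt1 nt_t.
have orbit_t : cyc_orbit (t, 1) = [set (t, 1)].
  apply/setP=> u; rewrite inE; apply/cyc_orbitP/eqP=> [[n ->] | ->]; last first.
    by exists 0%N; rewrite cyc_act0.
  have sigmaX_t : (sigma ^+ n) t = t by rewrite permX; elim: n => //= n ->.
  by rewrite /cyc_act /= sigmaX_t aut1 ?groupX.
apply/exists_inP; exists [set (t, 1)]; first by apply/cyc_setsP; exists (t, 1).
rewrite inv_pairs_set1 -[(t, 1) * _]/(t * t, 1 * 1) tt1 mulg1 eqxx andbT.
apply: contra nt_t => /eqP/setP/(_ (t, 1)).
by rewrite !inE eqxx => /esym/eqP[->].
Qed.

Lemma no_unique_inv_pair_cyc :
  (forall u, cyc_act 1 u = u -> u = 1) -> ~~ has_unique_inv_pair (cyc_sets A).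
Proof.
move=> fix1; apply/exists_inP.
case=> _ /cyc_setsP[g ->] /andP[nt_orbit /cards1P[[u v] pairs_uv]].
have uv_pair w : (w \in [set (u, v)])
    = [&& w.1 \in cyc_orbit g, w.2 \in cyc_orbit g & w.1 * w.2 == 1].
  by rewrite -pairs_uv !inE repr_set1 andbA.
have /and3P[orb_u orb_v /eqP uv1] := etrans (esym (uv_pair (u, v))) (set11 _).
(* The generator maps the unique pair (u, v) to such a pair, so it fixes u. *)
have /set1P[/fix1 u1 _] : (cyc_act 1 u, cyc_act 1 v) \in [set (u, v)].
  by rewrite uv_pair /= -cyc_actM uv1 cyc_act1 !cyc_act_orbit ?eqxx.
have [n def_u] := cyc_orbitP _ _ orb_u.
case/eqP: nt_orbit; rewrite -cyc_orbit1; congr cyc_orbit.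
by apply: (@cyc_act_inj n); rewrite -def_u u1 cyc_act1.
Qed.

Lemma all_symmetric_cycP :
  reflect (forall g, g^-1 \in cyc_orbit g) (all_symmetric (cyc_sets A)).
Proof.
apply: (iffP forall_inP) => [symS g | orbV _ /cyc_setsP[g ->]].
  by rewrite -inv_pairs_cyc_orbit symS //; apply/cyc_setsP; exists g.
by rewrite inv_pairs_cyc_orbit.
Qed.

End CycOrbits.

Section PrimeCyclic.
Variable p : nat.
Hypotheses (p_prime : prime p) (p_ge3 : 3 <= p).

Lemma Zp_cycle (q : 'Z_p) : q != 1 -> [set: 'Z_p] :=: <[q]>.
Proof.
move=> nt_q; apply: nt_gen_prime; last by rewrite !inE nt_q.
by rewrite cardsT card_ord Zp_cast ?prime_gt1.
Qed.

Lemma eq_Aut_Zp (a b : {perm 'Z_p}) (q : 'Z_p) :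
  a \in Aut [set: 'Z_p] -> b \in Aut [set: 'Z_p] -> q != 1 -> a q = b q -> a = b.
Proof. by move=> autA autB /Zp_cycle defZp; apply: (eq_Aut_cycle defZp). Qed.

Lemma Zp1_neq1 : (Zp1 : 'Z_p) != 1.
Proof. by rewrite -order_gt1 order_Zp1 Zp_cast ?prime_gt1. Qed.

Definition invZp : {perm 'Z_p} := perm (@invg_inj 'Z_p).

Lemma invZpE x : invZp x = x^-1.
Proof. by rewrite permE. Qed.

Lemma invZp_Aut : invZp \in Aut [set: 'Z_p].
Proof. by apply: morph_perm_Aut => x y; rewrite !invZpE invMg Zp_mulgC. Qed.

Lemma order_invZp : #[invZp] = 2.
Proof.
apply: nt_prime_order => //.
  by apply/permP=> x; rewrite perm1 expgS expg1 permM !invZpE invgK.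
apply: contraTneq p_ge3 => inv1; rewrite -ltnNge ltnS.
have : #[Zp1 : 'Z_p] %| 2.
  by rewrite order_dvdn expgS expg1 -{1}[Zp1]invgK -invZpE inv1 perm1 mulVg.
by rewrite order_Zp1 Zp_cast ?prime_gt1 // => /dvdn_leq->.
Qed.

Lemma Aut_Zp_order2 (nu : {perm 'Z_p}) :
  nu \in Aut [set: 'Z_p] -> #[nu] = 2 -> forall x, nu x = x^-1.
Proof.
move=> autNu nu2 x.
have cycAut : cyclic (Aut [set: 'Z_p]).
  by apply: Aut_prime_cyclic; rewrite cardsT card_ord Zp_cast ?prime_gt1.
have same_cycle : <[nu]> == <[invZp]> :> {set _}.
  rewrite (eq_subG_cyclic (G := Aut_group [set: 'Z_p]%G)) ?cycle_subG ?invZp_Aut //.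
  by rewrite -!orderE nu2 order_invZp.
have : nu \in <[invZp]> by rewrite -(eqP same_cycle) cycle_id.
rewrite cycle2g ?order_invZp // !inE.
by case/orP=> /eqP def_nu; [move: nu2; rewrite def_nu order1 | rewrite def_nu invZpE].
Qed.

End PrimeCyclic.


Ltac case_E1 x := case: x => -[[|[|?]] ?] -[[|[|?]] ?].

Lemma sigma1_Aut : sigma1 \in Aut [set: E1].
Proof.
apply: morph_perm_Aut => x y; rewrite !permE; apply/eqP.
by case_E1 x; case_E1 y.
Qed.

Lemma sigma1_fix x : sigma1 x = x -> x = 1.
Proof. by rewrite permE => /eqP; apply: contraTeq; case_E1 x. Qed.

Lemma order_sigma1 : #[sigma1] = 3.
Proof.
apply: nt_prime_order => //.
  by apply/permP=> x; rewrite perm1 permX /= !permE; apply/eqP; case_E1 x.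
by apply/eqP=> /permP/(_ (Zp1, 1)); rewrite perm1 permE.
Qed.

Lemma sigma2_Aut : sigma2 \in Aut [set: E1].
Proof.
apply: morph_perm_Aut => x y; rewrite !permE; apply/eqP.
by case_E1 x; case_E1 y.
Qed.

Lemma sigma2K : involutive sigma2.
Proof. by move=> x; rewrite !permE; case: x. Qed.

Lemma order_sigma2 : #[sigma2] = 2.
Proof. by apply: (order_involutive_perm (x := (Zp1, 1))) sigma2K _; rewrite permE. Qed.

Lemma sigma3_Aut : sigma3 \in Aut [set: E2].
Proof. by apply: morph_perm_Aut => x y; rewrite !permE /sig3_fun invMg Zp_mulgC. Qed.

Lemma sigma3K : involutive sigma3.
Proof. by move=> x; rewrite !permE /sig3_fun invgK. Qed.

Lemma order_sigma3 : #[sigma3] = 2.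
Proof. by apply: (order_involutive_perm (x := Zp1)) sigma3K _; rewrite permE. Qed.


Section CyclicAutZp.
Variables (p : nat) (K : {group {perm 'Z_p}}) (theta : {perm 'Z_p}).
Hypotheses (p_prime : prime p) (p_ge3 : 3 <= p).
Hypotheses (K_aut : K \subset Aut [set: 'Z_p]) (theta_gen : generator K theta).

Implicit Type M : {group {perm 'Z_p}}.

Let defK : K :=: <[theta]> := eqP theta_gen.

Lemma theta_Aut : theta \in Aut [set: 'Z_p].
Proof. by apply: (subsetP K_aut); rewrite defK cycle_id. Qed.

Lemma order_theta : #[theta] = #|K|.
Proof. by rewrite orderE defK. Qed.

Lemma theta_fixed (q : 'Z_p) : 1 < #|K| -> theta q = q -> q = 1.
Proof.
move=> ntK theta_q; apply/eqP; apply: contraTT ntK => nt_q.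
by rewrite -order_theta (eq_Aut_Zp p_prime theta_Aut (group1 _) nt_q) ?perm1 // order1.
Qed.

Lemma thetaX_half x : 2 %| #|K| -> (theta ^+ #|K|./2) x = x^-1.
Proof.
rewrite dvdn2 => evenK; set h := #|K|./2.
have Kh : #|K| = (h * 2)%N by rewrite muln2 even_halfK.
have h_gt0 : 0 < h by rewrite -(ltn_pmul2r (isT : 0 < 2)) -Kh cardG_gt0.
apply: Aut_Zp_order2 => //; first exact: groupX theta_Aut.
by rewrite orderXdiv order_theta Kh ?dvdn_mulr // mulKn.
Qed.

Lemma odd_thetaX_inv n : 2 %| #|K| -> (theta ^+ n) Zp1 = Zp1^-1 -> odd n = odd #|K|./2.
Proof.
move=> evenK; rewrite -(thetaX_half _ evenK) => /(eq_Aut_Zp p_prime (groupX _ theta_Aut)).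
move=> /(_ (groupX _ theta_Aut) (Zp1_neq1 p_prime)) /eqP; rewrite eq_expg_mod_order order_theta.
move: evenK; rewrite dvdn2 => /negbTE evenK /eqP n_h.
by rewrite -(odd_mod n evenK) n_h odd_mod.
Qed.

Lemma index_subgroup_cycle (E : finGroupType) (sigma : {perm E}) M :
  M \subset K -> #|K : M| = #[sigma] -> M :=: <[theta ^+ #[sigma]]>.
Proof. by rewrite defK => sMK <-; apply: cycle_subgroup_index. Qed.

Lemma no_unique_inv_pair_sigma1 M : M \subset K -> #|K : M| = 3 ->
  ~~ has_unique_inv_pair (cyc_sets (Agrp sigma1 K theta M)).
Proof.
rewrite -order_sigma1 => sMK idxM.
have ntK : 1 < #|K|.
  by rewrite (leq_trans _ (dvdn_leq _ (dvdn_indexg K M))) ?idxM ?order_sigma1.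
apply: (no_unique_inv_pair_cyc defK (index_subgroup_cycle sMK idxM) sigma1_Aut theta_Aut).
by move=> [x y] [/sigma1_fix-> /(theta_fixed ntK)->].
Qed.

Lemma all_symmetric_involution (E : finGroupType) (sigma : {perm E}) M :
    sigma \in Aut [set: E] -> #[sigma] = 2 -> M \subset K -> #|K : M| = 2 ->
  all_symmetric (cyc_sets (Agrp sigma K theta M))
    = [forall x, (if odd #|K|./2 then sigma x else x) == x^-1].
Proof.
move=> sigma_aut sigma2 sMK idxM.
have evenK : 2 %| #|K| by rewrite -idxM dvdn_indexg.
have sigmaK : involutive sigma.
  by move=> x; rewrite -permM -expg2 -sigma2 expg_order perm1.
rewrite -sigma2 in idxM; have defM := index_subgroup_cycle sMK idxM.
apply/(all_symmetric_cycP defK defM sigma_aut theta_Aut)/forallP.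
  move=> symS x; have /(cyc_orbitP defK defM)[n [xV ZpV]] := symS (x, Zp1).
  by rewrite -(odd_thetaX_inv evenK (esym ZpV)) -permX_involutive // -xV.
move=> sym_x [x y]; apply/(cyc_orbitP defK defM); exists #|K|./2.
by rewrite /cyc_act /= thetaX_half // permX_involutive // (eqP (sym_x x)).
Qed.

Lemma all_symmetric_sigma2 M : M \subset K -> #|K : M| = 2 ->
  all_symmetric (cyc_sets (Agrp sigma2 K theta M)) = ~~ odd #|K|./2.
Proof.
move=> sMK idxM; rewrite all_symmetric_involution ?sigma2_Aut ?order_sigma2 //.
case: (odd _); last by apply/forallP=> x; case_E1 x.
by apply/negP=> /forallP/(_ (Zp1, 1)); rewrite permE.
Qed.

Lemma all_symmetric_sigma3 M : M \subset K -> #|K : M| = 2 ->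
  all_symmetric (cyc_sets (Agrp sigma3 K theta M)) = odd #|K|./2.
Proof.
move=> sMK idxM; rewrite all_symmetric_involution ?sigma3_Aut ?order_sigma3 //.
case: (odd _); first by apply/forallP=> x; rewrite permE.
by apply/negP=> /forallP/(_ Zp1).
Qed.

Lemma one_isolated_calA i M :
    i \in [:: 1; 2; 3]%N -> M \subset K -> #|K : M| = sigma_order i ->
  one_isolated (sr_basic (calA i K theta M)).
Proof.
rewrite !inE => /or3P[]/eqP-> sMK idxM;
  apply: (one_isolated_cyc_sets defK (index_subgroup_cycle sMK idxM)) theta_Aut.
- exact: sigma1_Aut.
- exact: sigma2_Aut.
- exact: sigma3_Aut.
Qed.

Lemma has_unique_inv_pair_calA i M :
    i \in [:: 1; 2; 3]%N -> M \subset K -> #|K : M| = sigma_order i ->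
  has_unique_inv_pair (sr_basic (calA i K theta M)) = (i != 1%N).
Proof.
rewrite !inE => /or3P[]/eqP-> sMK /= idxM.
- by apply/negbTE/no_unique_inv_pair_sigma1; rewrite // idxM order_sigma1.
- have defM := index_subgroup_cycle sMK idxM.
  apply: (unique_inv_pair_cyc_fixed defK defM theta_Aut (t := (Zp1, Zp1)));
  by rewrite ?permE //; apply/eqP.
- have defM := index_subgroup_cycle sMK idxM.
  apply: (unique_inv_pair_cyc_fixed defK defM theta_Aut (t := Zp1 * Zp1 : E2));
  by rewrite ?permE //; apply/eqP.
Qed.

Lemma all_symmetric_calA i M :
    i \in [:: 2; 3]%N -> M \subset K -> #|K : M| = sigma_order i ->
  all_symmetric (sr_basic (calA i K theta M)) = (odd #|K|./2 == (i == 3%N)).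
Proof.
rewrite !inE => /orP[]/eqP-> sMK /= idxM.
- by rewrite all_symmetric_sigma2 ?eqbF_neg // idxM order_sigma2.
- by rewrite all_symmetric_sigma3 ?eqb_id // idxM order_sigma3.
Qed.

End CyclicAutZp.

Local Close Scope group_scope.

Theorem lemma3p5 (p : nat) (p_prime : prime p) (p_ge3 : 3 <= p)
    (K : {group {perm 'Z_p}}) (K_aut : K \subset Aut [set: 'Z_p])
    (theta : {perm 'Z_p}) (theta_gen : generator K theta)
    (i j : nat) (hi : i \in [:: 1; 2; 3]) (hj : j \in [:: 1; 2; 3]) (hij : i != j)
    (hdi : sigma_order i %| #|K|) (hdj : sigma_order j %| #|K|)
    (Mi Mj : {group {perm 'Z_p}})
    (hMi : Mi \subset K) (hMi_idx : #|K : Mi|%g = sigma_order i)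
    (hMj : Mj \subset K) (hMj_idx : #|K : Mj|%g = sigma_order j) :
  ~ alg_iso_sr (calA i K theta Mi) (calA j K theta Mj).
Proof.
(* [hdi] and [hdj] are implied by the index hypotheses and are not needed. *)
move/(alg_iso_invariants (one_isolated_calA K_aut theta_gen hi hMi hMi_idx)
                         (one_isolated_calA K_aut theta_gen hj hMj hMj_idx)).
rewrite !(has_unique_inv_pair_calA p_prime K_aut theta_gen) // => -[unique_ij sym_ij].
have {}sym_ij : i \in [:: 2; 3] -> j \in [:: 2; 3] -> (i == 3) = (j == 3).
  move=> i23 j23; move: sym_ij.
  rewrite !(all_symmetric_calA p_prime p_ge3 K_aut theta_gen) //.
  by case: (odd _); case: (i == 3); case: (j == 3).
move: hi hj hij unique_ij sym_ij; rewrite !inE.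
by case/or3P=> /eqP-> /or3P[] /eqP->; rewrite //= => _ _ /(_ isT isT).
Qed.
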